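(* Let $x^k\in\mathbb R^\ell$, let $\rho\in S_n$ be a permutation, and let $Q_1=(q_1,\dots,q_m)\in\mathbb R^{n\times m}$, $Q_2$, $\Lambda_1,\Lambda_2$ and $Z^k$ be as follows: $A(x^k)=(Q_1\;Q_2)\operatorname{diag}(\Lambda_1,\Lambda_2)(Q_1\;Q_2)^T$ with $(Q_1\;Q_2)$ orthogonal, $\Lambda_1=\operatorname{diag}(\lambda_{\rho_1}(x^k),\dots,\lambda_{\rho_m}(x^k))$, $\Lambda_2=\operatorname{diag}(\lambda_{\rho_{m+1}}(x^k),\dots,\lambda_{\rho_n}(x^k))$, and $Z^k=(Q_1\;Q_2)\operatorname{diag}(\Lambda^*,\Lambda_2)(Q_1\;Q_2)^T$ with $\Lambda^*=\operatorname{diag}(\lambda_1^*,\dots,\lambda_m^* )$. Let $x^{k+1}\in\mathbb R^\ell$ be the solution of the linear system $Bx^{k+1}=c$, where $c\in\mathbb R^\ell$ has entries $c_j=\langle Z^k-A_0,A_j\rangle_F$ (equivalently, $A(x^{k+1})$ is the point of the affine family $\{A(x):x\in\mathbb R^\ell\}$ closest to $Z^k$ in Frobenius norm). Then $$x^{k+1}=x^k-B^{-1}J_r(x^k)^T r(x^k,\rho)=x^k-B^{-1}\nabla F(x^k).$$ Consequently the Lift and Projection iteration ($x^k\mapsto$ lift to $Z^k$, then project) and the iteration $x^{k+1}=x^k-B^{-1}\nabla F(x^k)$ produce the same sequence of iterates from the same starting point (with the same choice of permutations).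
   Context: $A(x)=A_0+\sum_{i=1}^\ell x_iA_i$ for $x\in\mathbb R^\ell$, where $A_0,\dots,A_\ell\in\mathbb R^{n\times n}$ are linearly independent real symmetric matrices; $\lambda_1(x)\le\dots\le\lambda_n(x)$ are its eigenvalues. Given real numbers $\lambda_1^*\le\dots\le\lambda_m^*$ ($m\le n$) and $\rho\in S_n$: $r(x,\rho)\in\mathbb R^m$, $r_i=\lambda_{\rho_i}(x)-\lambda_i^*$; $F(x)=\frac12\|r(x,\rho)\|_2^2$. $\langle X,Y\rangle_F=\operatorname{Tr}(X^TY)$ is the Frobenius inner product. $B\in\mathbb R^{\ell\times\ell}$ is the Gram matrix $B_{ij}=\langle A_i,A_j\rangle_F$, $1\le i,j\le\ell$. $J_r(x)\in\mathbb R^{m\times\ell}$ is the matrix with entries $(J_r)_{ij}=q_i^TA_jq_i$, where $q_i$ is the unit eigenvector of $A(x)$ for $\lambda_{\rho_i}(x)$ (the $i$-th column of $Q_1$), and $\nabla F(x)=J_r(x)^Tr(x,\rho)$. *)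

From mathcomp Require Import all_boot all_order all_fingroup all_algebra.
Set Implicit Arguments. Unset Strict Implicit. Unset Printing Implicit Defensive.
Import Order.TTheory GRing.Theory Num.Theory.
Local Open Scope ring_scope.

Section Defs.
Variable R : realFieldType.

Definition frob (n : nat) (X Y : 'M[R]_n) : R := \tr (X^T *m Y).

(* The affine family A(x) = A_0 + sum_{i=1}^l x_i A_i ; A_i is [As i] (0-based). *)
Definition Aff (n l : nat) (A0 : 'M[R]_n) (As : 'I_l -> 'M[R]_n) (x : 'cV[R]_l)
  : 'M[R]_n := A0 + \sum_(i < l) x i 0 *: As i.

Definition lin_indep_family (n l : nat) (A0 : 'M[R]_n) (As : 'I_l -> 'M[R]_n) :=
  forall (c0 : R) (c : 'I_l -> R),
    c0 *: A0 + \sum_(i < l) c i *: As i = 0 -> c0 = 0 /\ forall i, c i = 0.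

Definition gram (n l : nat) (As : 'I_l -> 'M[R]_n) : 'M[R]_l :=
  \matrix_(i, j) frob (As i) (As j).

Definition sorted_eigenvalues (n : nat) (M : 'M[R]_n) (lam : 'I_n -> R) :=
  (forall i j : 'I_n, (i <= j)%N -> lam i <= lam j) /\
  char_poly M = \prod_(i < n) ('X - (lam i)%:P).

Definition orthogonalmx (n : nat) (Q : 'M[R]_n) := Q^T *m Q = 1%:M.

Definition resid (n m : nat) (Hm : (m <= n)%N) (lam : 'I_n -> R) (rho : 'S_n)
  (lamstar : 'I_m -> R) : 'cV[R]_m :=
  \col_(i < m) (lam (rho (widen_ord Hm i)) - lamstar i).

Definition Jr (n m l : nat) (Hm : (m <= n)%N) (Q : 'M[R]_n)
  (As : 'I_l -> 'M[R]_n) : 'M[R]_(m, l) :=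
  \matrix_(i < m, j < l)
     ((col (widen_ord Hm i) Q)^T *m As j *m col (widen_ord Hm i) Q) 0 0.

Definition gradF (n m l : nat) (Hm : (m <= n)%N) (Q : 'M[R]_n)
  (As : 'I_l -> 'M[R]_n) (lam : 'I_n -> R) (rho : 'S_n) (lamstar : 'I_m -> R)
  : 'cV[R]_l := (Jr Hm Q As)^T *m resid Hm lam rho lamstar.

(* Z^k = Q diag(Lambda^*, Lambda_2) Q^T *)
Definition liftZ (n m : nat) (Q : 'M[R]_n) (lam : 'I_n -> R) (rho : 'S_n)
  (lamstar : 'I_m -> R) : 'M[R]_n :=
  Q *m diag_mx (\row_(j < n)
        oapp lamstar (lam (rho j)) (insub (val j) : option 'I_m)) *m Q^T.
End Defs.

(* The lift Z^k differs from A(x^k) = Q diag(lam o rho) Q^T only in the first m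
   diagonal entries of the middle factor, by lamstar_i - lam_{rho_i}.  Pairing
   this correction Q diag(e) Q^T with A_j in the Frobenius product gives
   sum_i e_i q_i^T A_j q_i = -(J_r^T r)_j, while pairing A(x^k) - A_0 with A_j
   gives (B x^k)_j.  Hence c = B x^k - J_r^T r, and B is invertible because the
   A_j are linearly independent. *)
From mathcomp Require Import all_boot all_order all_fingroup all_algebra.
Set Implicit Arguments. Unset Strict Implicit. Unset Printing Implicit Defensive.
Import Order.TTheory GRing.Theory Num.Theory.
Local Open Scope ring_scope.

Section Frobenius.
Variables (R : realFieldType) (n : nat).
Implicit Types X Y A Q : 'M[R]_n.

Lemma frobC X Y : frob X Y = frob Y X.
Proof. by rewrite /frob -mxtrace_tr trmx_mul trmxK. Qed.

Lemma frobDl X Y A : frob (X + Y) A = frob X A + frob Y A.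
Proof. by rewrite /frob linearD /= mulmxDl mxtraceD. Qed.

Lemma frob_sumZl l (c : 'I_l -> R) (M : 'I_l -> 'M[R]_n) Y :
  frob (\sum_i c i *: M i) Y = \sum_i c i * frob (M i) Y.
Proof.
rewrite /frob linear_sum /= mulmx_suml raddf_sum; apply: eq_bigr => i _.
by rewrite linearZ /= -scalemxAl mxtraceZ.
Qed.

Lemma frob_sumZr l (c : 'I_l -> R) (M : 'I_l -> 'M[R]_n) Y :
  frob Y (\sum_i c i *: M i) = \sum_i c i * frob Y (M i).
Proof. by rewrite frobC frob_sumZl; under eq_bigr do rewrite frobC. Qed.

Lemma frob_self_eq0 X : frob X X = 0 -> X = 0.
Proof.
have sqr_sum_ge0 (k : 'I_n) : 0 <= \sum_i X i k ^+ 2.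
  by apply: sumr_ge0 => i _; exact: sqr_ge0.
have -> : frob X X = \sum_k \sum_i X i k ^+ 2.
  rewrite /frob /mxtrace; apply: eq_bigr => k _; rewrite mxE.
  by apply: eq_bigr => i _; rewrite mxE expr2.
move=> /psumr_eq0P X0; apply/matrixP => i k; rewrite mxE.
have /psumr_eq0P Xk0 := X0 (fun k _ => sqr_sum_ge0 k) k isT.
by apply/eqP; rewrite -sqrf_eq0 Xk0 // => j _; exact: sqr_ge0.
Qed.

Lemma conjmx_col_diagE Q A k :
  (Q^T *m A *m Q) k k = ((col k Q)^T *m A *m col k Q) 0 0.
Proof.
rewrite !mxE; apply: eq_bigr => a _; rewrite !mxE; congr (_ * _).
by apply: eq_bigr => b _; rewrite !mxE.
Qed.

Lemma frob_conj_diag Q (d : 'rV[R]_n) A :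
  frob (Q *m diag_mx d *m Q^T) A =
  \sum_k d 0 k * ((col k Q)^T *m A *m col k Q) 0 0.
Proof.
rewrite /frob !trmx_mul tr_diag_mx trmxK -!mulmxA mxtrace_mulC -!mulmxA.
rewrite mul_diag_mx /mxtrace; apply: eq_bigr => k _.
by rewrite mxE mulmxA conjmx_col_diagE.
Qed.

End Frobenius.

Section Gram.
Variables (R : realFieldType) (n l : nat) (As : 'I_l -> 'M[R]_n).

Lemma frob_sumZ_gram (x : 'cV[R]_l) j :
  frob (\sum_i x i 0 *: As i) (As j) = (gram As *m x) j 0.
Proof.
by rewrite frob_sumZl mxE; apply: eq_bigr => i _; rewrite mxE frobC mulrC.
Qed.

Lemma gram_quadform (v : 'rV[R]_l) :
  (v *m gram As *m v^T) 0 0 =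
  frob (\sum_i v 0 i *: As i) (\sum_i v 0 i *: As i).
Proof.
rewrite frob_sumZl mxE; under [RHS]eq_bigr do rewrite frob_sumZr mulr_sumr.
under [LHS]eq_bigr do rewrite !mxE mulr_suml.
rewrite exchange_big /=; apply: eq_bigr => i _; apply: eq_bigr => j _.
by rewrite !mxE mulrA mulrAC.
Qed.

Lemma unitmx_gram (A0 : 'M[R]_n) : lin_indep_family A0 As -> gram As \in unitmx.
Proof.
move=> indep; rewrite unitmxE unitfE; apply/negP => /det0P [v v_neq0 vB0].
have comb0 : \sum_i v 0 i *: As i = 0.
  by apply: frob_self_eq0; rewrite -gram_quadform vB0 mul0mx mxE.
have [|_ v0] := indep 0 (fun i => v 0 i); first by rewrite scale0r add0r.
suff v_eq0 : v = 0 by rewrite v_eq0 eqxx in v_neq0.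
by apply/matrixP => a b; rewrite ord1 mxE v0.
Qed.

End Gram.

Section Lift.
Variables (R : realFieldType) (n m : nat) (Hm : (m <= n)%N).
Variables (Q : 'M[R]_n) (lam : 'I_n -> R) (rho : 'S_n) (lamstar : 'I_m -> R).

Definition lift_correction : 'rV[R]_n :=
  \row_(j < n) oapp (fun i => lamstar i - lam (rho j)) 0
                    (insub (val j) : option 'I_m).

Lemma liftZE :
  liftZ Q lam rho lamstar =
  Q *m diag_mx (\row_(j < n) lam (rho j)) *m Q^T
  + Q *m diag_mx lift_correction *m Q^T.
Proof.
rewrite -mulmxDl -mulmxDr /liftZ; congr (_ *m _ *m _).
apply/matrixP => i j; rewrite !mxE; case: (i == j); rewrite ?mulr0n ?addr0 //.
by case: insub => [k|] /=; rewrite ?mulr1n ?addr0 // addrC subrK.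
Qed.

Lemma frob_lift_correction l (As : 'I_l -> 'M[R]_n) j :
  frob (Q *m diag_mx lift_correction *m Q^T) (As j) =
  - ((Jr Hm Q As)^T *m resid Hm lam rho lamstar) j 0.
Proof.
rewrite frob_conj_diag (bigID (fun k : 'I_n => (k < m)%N)) /=.
rewrite [X in _ + X]big1 => [|k k_ge_m]; last first.
  rewrite mxE; case: insubP => [i k_lt_m _|_]; last by rewrite mul0r.
  by rewrite k_lt_m in k_ge_m.
rewrite addr0 (big_ord_narrow Hm) mxE -sumrN; apply: eq_bigr => i _.
rewrite !mxE; case: insubP => [i' _ i'E|] /=; last by rewrite ltn_ord.
have -> : i' = i by apply: val_inj.
by rewrite mulrC -mulrN opprB.
Qed.

End Lift.

Lemma lift_project_rhs (R : realFieldType) (n m l : nat) (Hm : (m <= n)%N)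
    (A0 : 'M[R]_n) (As : 'I_l -> 'M[R]_n) (xk : 'cV[R]_l) (lam : 'I_n -> R)
    (rho : 'S_n) (Q : 'M[R]_n) (lamstar : 'I_m -> R) :
  Aff A0 As xk = Q *m diag_mx (\row_(j < n) lam (rho j)) *m Q^T ->
  \col_(j < l) frob (liftZ Q lam rho lamstar - A0) (As j) =
  gram As *m xk - (Jr Hm Q As)^T *m resid Hm lam rho lamstar.
Proof.
move=> decomp; apply/matrixP => j k; rewrite ord1 mxE [X in _ = X]mxE.
rewrite [X in _ = _ + X]mxE.
rewrite liftZE -decomp /Aff addrAC [A0 + _]addrC addrK frobDl.
by rewrite frob_sumZ_gram frob_lift_correction.
Qed.

Theorem mainTheorem2 (R : realFieldType) (n m l : nat) (Hm : (m <= n)%N)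
  (A0 : 'M[R]_n) (As : 'I_l -> 'M[R]_n)
  (HA0sym : A0^T = A0) (HAsym : forall i, (As i)^T = As i)
  (Hindep : lin_indep_family A0 As)
  (lamstar : 'I_m -> R)
  (Hlamstar : forall i j : 'I_m, (i <= j)%N -> lamstar i <= lamstar j)
  (xk : 'cV[R]_l) (lam : 'I_n -> R)
  (Hlam : sorted_eigenvalues (Aff A0 As xk) lam)
  (rho : 'S_n) (Q : 'M[R]_n) (HQ : orthogonalmx Q)
  (Hdecomp : Aff A0 As xk = Q *m diag_mx (\row_(j < n) lam (rho j)) *m Q^T)
  (xk1 : 'cV[R]_l)
  (Hxk1 : gram As *m xk1 =
          \col_(j < l) frob (liftZ Q lam rho lamstar - A0) (As j)) :
  xk1 = xk - invmx (gram As) *m ((Jr Hm Q As)^T *m resid Hm lam rho lamstar)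
  /\ xk1 = xk - invmx (gram As) *m gradF Hm Q As lam rho lamstar.
Proof.
have B_unit := unitmx_gram Hindep.
have xk1E : xk1 = xk - invmx (gram As) *m gradF Hm Q As lam rho lamstar.
  rewrite -[xk1](mulKmx B_unit) Hxk1 (lift_project_rhs Hm lamstar Hdecomp).
  by rewrite mulmxBr mulKmx.
by split.
Qed.
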